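(* Let $X$ be a topological space, $x\in X$, and $\mathcal B_x$ a local base at $x$. Then $\bigcap\{\overline{B}:B\in\mathcal B_x\}$ equals the union of all finitely non-Hausdorff subsets of $X$ that contain $x$, and it also equals the union of all maximal finitely non-Hausdorff subsets of $X$ that contain $x$.
   Context: A non-empty subset $A$ of a topological space $X$ is called finitely non-Hausdorff if for every non-empty finite subset $F\subseteq A$ and every family $\{U_y:y\in F\}$ where each $U_y$ is an open neighborhood of $y$, we have $\bigcap_{y\in F}U_y\neq\emptyset$. It is maximal finitely non-Hausdorff if no finitely non-Hausdorff subset of $X$ properly contains it. *)

From HB Require Import structures.
From mathcomp Require Import all_boot all_classical.
From mathcomp Require Import topology.
Set Implicit Arguments. Unset Strict Implicit. Unset Printing Implicit Defensive.
Local Open Scope classical_set_scope.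

Definition fin_non_hausdorff {X : topologicalType} (A : set X) : Prop :=
  A !=set0 /\
  forall F : set X, finite_set F -> F !=set0 -> F `<=` A ->
  forall U : X -> set X, (forall y, F y -> open (U y) /\ U y y) ->
  (\bigcap_(y in F) U y) !=set0.

Definition max_fin_non_hausdorff {X : topologicalType} (A : set X) : Prop :=
  fin_non_hausdorff A /\
  forall B : set X, fin_non_hausdorff B -> A `<=` B -> B = A.

Definition local_base {X : topologicalType} (x : X) (BB : set (set X)) : Prop :=
  (forall B, BB B -> open B /\ B x) /\
  (forall U, nbhs x U -> exists2 B, BB B & B `<=` U).

(* A subset of a finitely non-Hausdorff set is again finitely non-Hausdorff, and
   a pair {x, z} is finitely non-Hausdorff exactly when z lies in the closure of
   every neighbourhood of x, i.e. of every basic neighbourhood. Hence some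
   finitely non-Hausdorff set contains both x and z iff z lies in the intersection
   of the closures. For maximal sets one extends {x, z} by Zorn's lemma, which
   applies because the property only involves finite subsets, and a finite subset
   of the union of a chain already lies in one member of the chain. *)

From HB Require Import structures.
From mathcomp Require Import all_boot all_classical.
From mathcomp Require Import topology.

Set Implicit Arguments.
Unset Strict Implicit.
Unset Printing Implicit Defensive.
Local Open Scope classical_set_scope.

Lemma chain_bigcup_seq_sub (T : eqType) (F : set (set T)) (s : seq T) :
  F !=set0 -> total_on F subset -> [set` s] `<=` \bigcup_(A in F) A ->
  exists2 A, F A & [set` s] `<=` A.
Proof.
move=> [A0 FA0] totF; elim: s => [|y s IHs] sF.
  by exists A0 => // w /=; rewrite in_nil.
have [|A FA sA] := IHs; first by move=> w sw; apply: sF; rewrite /= in_cons sw orbT.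
have [B FB By] : (\bigcup_(A in F) A) y by apply: sF; rewrite /= in_cons eqxx.
have [AB|BA] := totF A B FA FB.
- by exists B => // w /=; rewrite in_cons => /orP[/eqP ->|/sA/AB].
- by exists A => // w /=; rewrite in_cons => /orP[/eqP ->|/sA]; [exact: BA|].
Qed.

Section FinitelyNonHausdorff.
Context {X : topologicalType}.
Implicit Types (A S : set X) (x z : X).

Lemma sub_fin_non_hausdorff A S :
  A `<=` S -> A !=set0 -> fin_non_hausdorff S -> fin_non_hausdorff A.
Proof.
move=> AS A0 [_ finS]; split=> // F finF F0 FA; apply: finS => //.
exact: subset_trans AS.
Qed.

Lemma fin_non_hausdorff_bigcup_chain (F : set (set X)) :
  F !=set0 -> F `<=` fin_non_hausdorff -> total_on F subset ->
  fin_non_hausdorff (\bigcup_(A in F) A).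
Proof.
move=> F0 FfnH totF; have [A FA] := F0.
split; first by have [a Aa] := (FfnH A FA).1; exists a, A.
move=> G /finite_seqP[s ->] G0 sF.
have [B FB sB] := chain_bigcup_seq_sub F0 totF sF.
exact: (FfnH B FB).2.
Qed.

Lemma fin_non_hausdorff_maximal_superset S :
  fin_non_hausdorff S -> exists2 M, max_fin_non_hausdorff M & S `<=` M.
Proof.
move=> fnHS.
pose P A := fin_non_hausdorff (S `|` A).
have [|A [PA maxA]] := @Zorn_bigcup X P.
  move=> F FP totF; have [->|F0] := eqVneq F set0.
    by rewrite /P bigcup_set0 setU0.
  rewrite /P -bigcupUr; last exact/set0P.
  rewrite -(bigcup_image F (setU S) id).
  apply: fin_non_hausdorff_bigcup_chain.
  - by have /set0P[A FA] := F0; exists (S `|` A), A.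
  - by move=> _ [A FA <-]; exact: FP.
  - move=> _ _ [A FA <-] [B FB <-].
    by have [AB|BA] := totF A B FA FB; [left|right]; apply: setUS.
exists (S `|` A) => //; split=> // B fnHB SAB.
apply/seteqP; split=> //; apply: contrapT => BSA.
apply: (maxA B); last by rewrite /P (setUidPr _ _).2 // => w Sw; apply: SAB; left.
split; first by move=> w Aw; apply: SAB; right.
by move=> BA; apply: BSA => w /BA; right.
Qed.

Lemma fin_non_hausdorff2 x z :
  fin_non_hausdorff [set x; z] <-> forall N, nbhs x N -> closure N z.
Proof.
split=> [[_ fnH2] N Nx|clz].
  have [<-|xz] := eqVneq x z.
    by move=> M /nbhs_singleton Mx; exists x; split; first exact: nbhs_singleton.
  move=> M Mz; pose U y := if y == x then N° else M°.
  have xz0 : [set x; z] !=set0 by exists x; left.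
  have [|w Uw] := fnH2 _ (finite_set2 x z) xz0 (@subset_refl _ _) U.
    move=> y [->|->]; rewrite /U ?eqxx 1?eq_sym ?(negPf xz);
      by split; [exact: open_interior|apply: nbhs_singleton; exact: nbhs_interior].
  have := Uw x (or_introl erefl); have := Uw z (or_intror erefl).
  rewrite /U eqxx eq_sym (negPf xz) => Mw Nw.
  by exists w; split; apply: interior_subset.
split; first by exists x; left.
move=> F _ _ Fxz U UF.
have [Fx|nFx] := pselect (F x); last first.
  by exists z => y /[dup] /Fxz[-> /nFx[]|-> /UF[]].
have [Fz|nFz] := pselect (F z); last first.
  by exists x => y /[dup] /Fxz[-> /UF[]|-> /nFz[]].
have [Uxo Uxx] := UF x Fx; have [Uzo Uzz] := UF z Fz.
have [w [Uxw Uzw]] := clz _ (open_nbhs_nbhs (conj Uxo Uxx)) _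
                        (open_nbhs_nbhs (conj Uzo Uzz)).
by exists w => y /Fxz[->|->].
Qed.

Lemma local_base_closure x BB z : local_base x BB ->
  (forall B, BB B -> closure B z) <-> (forall N, nbhs x N -> closure N z).
Proof.
move=> [BBnbhs BBsub]; split=> [clBB N /BBsub[B BBB BN]|clN B BBB].
  exact: closureS BN z (clBB B BBB).
exact/clN/open_nbhs_nbhs/BBnbhs.
Qed.

End FinitelyNonHausdorff.

Theorem lemma2p9 (X : topologicalType) (x : X) (BB : set (set X)) :
  local_base x BB ->
  (\bigcap_(B in BB) closure B =
     \bigcup_(A in [set A : set X | fin_non_hausdorff A /\ A x]) A) /\
  (\bigcap_(B in BB) closure B =
     \bigcup_(A in [set A : set X | max_fin_non_hausdorff A /\ A x]) A).
Proof.
move=> lbx.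
have pairP z : (\bigcap_(B in BB) closure B) z <-> fin_non_hausdorff [set x; z].
  by rewrite fin_non_hausdorff2 -(local_base_closure z lbx).
have to_max : \bigcap_(B in BB) closure B `<=`
    \bigcup_(A in [set A | max_fin_non_hausdorff A /\ A x]) A.
  move=> z /pairP/fin_non_hausdorff_maximal_superset[M maxM xzM].
  by exists M; [split=> //; apply: xzM; left|apply: xzM; right].
have from_fin : \bigcup_(A in [set A | fin_non_hausdorff A /\ A x]) A `<=`
    \bigcap_(B in BB) closure B.
  move=> z [A [fnHA Ax] Az]; apply/pairP.
  by apply: sub_fin_non_hausdorff fnHA; [move=> y [->|->]|exists x; left].
have max_fin : \bigcup_(A in [set A | max_fin_non_hausdorff A /\ A x]) A `<=`
    \bigcup_(A in [set A | fin_non_hausdorff A /\ A x]) A.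
  by move=> z [A [[fnHA _] Ax] Az]; exists A.
by split; apply/seteqP; split=> // z Hz; [apply/max_fin/to_max|apply/from_fin/max_fin].
Qed.
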